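(* Let $D,\beta,\delta,\alpha\in\mathbb R$ with $(\beta,D)\neq(0,0)$, and let $\lambda\in\mathbb C$ with $\lambda\notin\sigma_{\mathrm{ess}}$, where $$\sigma_{\mathrm{ess}}=\Big\{\lambda\in\mathbb C:\ \lambda=(\delta\pm i\alpha)-s^2\big(\beta\pm i\tfrac D2\big)\ \text{for some } s\in\mathbb R\Big\}$$ (the two $\pm$ signs taken together). Then the matrix $$\mathbf A_\infty(\lambda)=\begin{bmatrix}\mathbf 0&\mathbf I\\ \mathbf B^{-1}(\lambda\mathbf I-\mathbf N_0)&\mathbf 0\end{bmatrix}\in\mathbb C^{4\times4},\qquad \mathbf B=\begin{bmatrix}\beta&-\frac D2\\ \frac D2&\beta\end{bmatrix},\quad \mathbf N_0=\begin{bmatrix}\delta&-\alpha\\ \alpha&\delta\end{bmatrix},$$ has two eigenvalues with positive real part and two eigenvalues with negative real part.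
   Context: Here $\mathbf I$ and $\mathbf 0$ denote the $2\times2$ identity and zero matrices. The set $\sigma_{\mathrm{ess}}$ is the essential spectrum of the operator $\mathbf B\partial_x^2+\mathbf N_0$ obtained as the asymptotic part of the linearization of the cubic-quintic complex Ginzburg–Landau equation about a stationary pulse. *)

From HB Require Import structures.
From mathcomp Require Import all_boot all_order all_algebra.
From mathcomp Require Import complex.
Set Implicit Arguments. Unset Strict Implicit. Unset Printing Implicit Defensive.
Import Order.TTheory GRing.Theory Num.Theory.
Local Open Scope ring_scope.

Definition mx2 (K : pzRingType) (a b c d : K) : 'M[K]_2 :=
  \matrix_(i < 2, j < 2)
    if (i : nat) == 0%N then (if (j : nat) == 0%N then a else b)
    else (if (j : nat) == 0%N then c else d).

Definition rC (R : rcfType) (x : R) : R[i] := Complex x 0.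

Definition Bmx (R : rcfType) (beta D : R) : 'M[R[i]]_2 :=
  mx2 (rC beta) (rC (- (D / 2))) (rC (D / 2)) (rC beta).

Definition N0mx (R : rcfType) (delta alpha : R) : 'M[R[i]]_2 :=
  mx2 (rC delta) (rC (- alpha)) (rC alpha) (rC delta).

Definition Ainf (R : rcfType) (D beta delta alpha : R) (lam : R[i])
  : 'M[R[i]]_(2 + 2) :=
  block_mx 0 1%:M
    (invmx (Bmx beta D) *m (lam%:M - N0mx delta alpha)) 0.

Definition sigma_ess (R : rcfType) (D beta delta alpha : R) (lam : R[i]) : Prop :=
  exists s : R,
    lam = Complex delta alpha - rC (s ^+ 2) * Complex beta (D / 2)
    \/ lam = Complex delta (- alpha) - rC (s ^+ 2) * Complex beta (- (D / 2)).

(* Writing X := 'X^2, block elimination gives char_poly A_oo(lambda) =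
   det (X - B^-1 (lambda - N0)).  Both B and lambda - N0 have the rotation
   shape [[p, -q]; [q, p]], whose determinant is (p + i q)(p - i q), so
   det B * char_poly A_oo = (a X - (lambda - c)) (a' X - (lambda - c')) with
   a, a' = beta +- i D/2 and c, c' = delta +- i alpha.  Outside sigma_ess
   neither (lambda - c)/a nor (lambda - c')/a' is a nonpositive real, so each
   has a square root r with Re r > 0, and the eigenvalues are r, -r, r', -r'. *)
From HB Require Import structures.
From mathcomp Require Import all_boot all_order all_algebra.
From mathcomp Require Import complex ring.
Set Implicit Arguments. Unset Strict Implicit. Unset Printing Implicit Defensive.
Import Order.TTheory GRing.Theory Num.Theory.
Local Open Scope ring_scope.

Lemma det_block_scalar (S : comNzRingType) n (x : S) (P : 'M[S]_n) :
  \det (block_mx x%:M (-1%:M) (-P) x%:M) = \det ((x * x)%:M - P).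
Proof.
set C := (x * x)%:M - P.
have reduce : block_mx 1%:M 0 (-1%:M) 1%:M *m (block_mx 1%:M 1%:M 0 1%:M *m
     (block_mx 1%:M 0 x%:M 1%:M *m (block_mx x%:M (-1%:M) (-P) x%:M *m
      block_mx 1%:M 0 x%:M 1%:M))) = block_mx C (-1%:M) 0 1%:M.
  rewrite !mulmx_block.
  rewrite !(mul1mx, mulmx1, mul0mx, mulmx0, addr0, add0r, mulNmx, mulmxN).
  rewrite -!scalar_mxM /C; congr block_mx.
  all: rewrite ?subrr ?addNr ?mulmx0 ?add0r ?addr0 ?opprK ?addNr //.
  by apply/matrixP=> i j; rewrite !mxE addrC.
have := congr1 determinant reduce.
by rewrite !det_mulmx !det_ublock !det_lblock !det1 !mul1r !mulr1.
Qed.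

Lemma char_poly_block_companion (S : comNzRingType) n (A : 'M[S]_n) :
  char_poly (block_mx 0 1%:M A 0) = \det (('X * 'X)%:M - map_mx polyC A).
Proof.
rewrite /char_poly /char_poly_mx map_block_mx map_mx0 map_mx1.
rewrite (scalar_mx_block n n) opp_block_mx add_block_mx !oppr0 !addr0 !add0r.
exact: det_block_scalar.
Qed.

Lemma det_mx2 (S : comNzRingType) (a b c d : S) :
  \det (mx2 a b c d) = a * d - b * c.
Proof.
rewrite (expand_det_row _ 0) !big_ord_recl big_ord0 /cofactor !det_mx11 !mxE /=.
by rewrite addr0 expr0 expr1 mul1r mulN1r mulrN.
Qed.

Lemma det_mx2_rot (S : comNzRingType) (i : S) : i ^+ 2 = -1 ->
  forall a b, \det (mx2 a (- b) b a) = (a + i * b) * (a - i * b).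
Proof.
move=> sqr_i1 a b; rewrite det_mx2.
transitivity (a * a - i ^+ 2 * (b * b)); last by ring.
by rewrite sqr_i1; ring.
Qed.

Lemma Complex_rC (R : rcfType) (x y : R) : Complex x y = rC x + 'i%C * rC y.
Proof. exact: (complexE (Complex x y)). Qed.

Lemma rCN (R : rcfType) (x : R) : rC (- x) = - rC x.
Proof. exact: (rmorphN (real_complex R)). Qed.

Lemma rCX (R : rcfType) (x : R) n : rC (x ^+ n) = rC x ^+ n.
Proof. exact: (rmorphXn (real_complex R)). Qed.

Lemma Complex_half_neq0 (R : rcfType) (beta D : R) : (beta, D) != (0, 0) ->
  Complex beta (D / 2) != 0 /\ Complex beta (- (D / 2)) != 0.
Proof.
move=> nz; have nzh : (beta != 0) || (D / 2 != 0).
  by rewrite mulf_eq0 invr_eq0 pnatr_eq0 orbF -negb_and -xpair_eqE.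
by split; rewrite eq_complex /= negb_and ?oppr_eq0.
Qed.

Lemma det_Bmx (R : rcfType) (beta D : R) :
  \det (Bmx beta D) = Complex beta (D / 2) * Complex beta (- (D / 2)).
Proof.
rewrite /Bmx rCN (det_mx2_rot (sqr_i R)).
by rewrite (Complex_rC beta) (Complex_rC beta (- _)) rCN mulrN.
Qed.

Lemma char_poly_Ainf (R : rcfType) (D beta delta alpha : R) (lam : R[i]) :
  Bmx beta D \in unitmx ->
  (\det (Bmx beta D))%:P * char_poly (Ainf D beta delta alpha lam) =
    ((Complex beta (D / 2))%:P * ('X * 'X) - (lam - Complex delta alpha)%:P) *
    ((Complex beta (- (D / 2)))%:P * ('X * 'X)
       - (lam - Complex delta (- alpha))%:P).
Proof.
move=> unitB; rewrite /Ainf char_poly_block_companion -det_map_mx -det_mulmx.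
rewrite mulmxBr map_mxM mulmxA -map_mxM mulmxV // map_mx1 mul1mx mul_mx_scalar.
set p := (rC beta)%:P * ('X * 'X) - (lam - rC delta)%:P.
set q := (rC (D / 2))%:P * ('X * 'X) + (rC alpha)%:P.
have -> : ('X * 'X) *: map_mx polyC (Bmx beta D)
          - map_mx polyC (lam%:M - N0mx delta alpha) = mx2 p (- q) q p.
  apply/matrixP=> i j; rewrite !mxE.
  case: i j => [[|[|//]] ?] [[|[|//]] ?] /=;
  by rewrite /p /q ?rCN ?mulr1n ?mulr0n !(rmorphB, rmorphN) ?polyC0 /=
    ?mulrN ?sub0r ?opprK ?opprD mulrC.
have sqr_iP : ('i%C)%:P ^+ 2 = -1 :> {poly R[i]}.
  by rewrite -rmorphXn sqr_i rmorphN1.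
rewrite (det_mx2_rot sqr_iP) /p /q (Complex_rC beta) (Complex_rC beta (- _)).
rewrite (Complex_rC delta) (Complex_rC delta (- _)) !rCN.
by congr (_ * _); rewrite !(rmorphB, rmorphD, rmorphN, rmorphM); ring.
Qed.

Lemma sqrtC_Re_gt0 (C : numClosedFieldType) (m : C) :
  (forall t, t \is Num.real -> m != - t ^+ 2) ->
  exists2 r, r ^+ 2 = m & 0 < 'Re r.
Proof.
move=> not_neg_sqr; have sqrtm := sqrtCK m.
case: (real_ltgt0P (Creal_Re (sqrtC m))) => [Re_gt0 | Re_lt0 | Re_0].
- by exists (sqrtC m).
- by exists (- sqrtC m); rewrite ?sqrrN // raddfN oppr_gt0.
- have := not_neg_sqr _ (Creal_Im (sqrtC m)).
  by rewrite -{1}sqrtm {1}[sqrtC m]Crect Re_0 add0r exprMn sqrCi mulN1r eqxx.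
Qed.

Lemma quadratic_root_Re_gt0 (R : rcfType) (a c lam : R[i]) : a != 0 ->
  (forall s : R, lam != c - rC (s ^+ 2) * a) ->
  exists2 r, lam - c = r ^+ 2 * a & 0 < 'Re r.
Proof.
move=> nz_a off_curve.
have [|r sqr_r Re_r] := @sqrtC_Re_gt0 _ ((lam - c) / a).
  move=> _ /complex_realP [s ->]; apply: contraNneq (off_curve s) => sqr_s.
  by rewrite rCX -mulNr -sqr_s divfK // addrC subrK.
by exists r; rewrite // sqr_r divfK.
Qed.

Theorem proposition4p3 (R : rcfType) (D beta delta alpha : R) (lam : R[i]) :
  (beta, D) != (0, 0) ->
  ~ sigma_ess D beta delta alpha lam ->
  exists rs : seq R[i],
    char_poly (Ainf D beta delta alpha lam) = \prod_(z <- rs) ('X - z%:P)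
    /\ count (fun z => 0 < Re z) rs = 2%N
    /\ count (fun z => Re z < 0) rs = 2%N.
Proof.
move=> nz_BD not_ess; have [nz_a1 nz_a2] := Complex_half_neq0 nz_BD.
have nz_detB : \det (Bmx beta D) != 0 by rewrite det_Bmx mulf_neq0.
have [r1 root_r1 Re_r1] : exists2 r,
    lam - Complex delta alpha = r ^+ 2 * Complex beta (D / 2) & 0 < 'Re r.
  apply: quadratic_root_Re_gt0 nz_a1 _ => s.
  by apply/eqP => ess; apply: not_ess; exists s; left.
have [r2 root_r2 Re_r2] : exists2 r,
    lam - Complex delta (- alpha) = r ^+ 2 * Complex beta (- (D / 2)) & 0 < 'Re r.
  apply: quadratic_root_Re_gt0 nz_a2 _ => s.
  by apply/eqP => ess; apply: not_ess; exists s; right.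
exists [:: r1; - r1; r2; - r2]; split; last first.
  rewrite /= !raddfN !oppr_gt0 !oppr_lt0 Re_r1 Re_r2.
  by rewrite !(lt_gtF Re_r1) !(lt_gtF Re_r2).
apply: (@mulfI _ (\det (Bmx beta D))%:P); first by rewrite polyC_eq0.
rewrite char_poly_Ainf ?unitmxE ?unitfE // root_r1 root_r2 det_Bmx.
by rewrite !big_cons big_nil !(rmorphM, rmorphN, rmorphXn); ring.
Qed.
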